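(* Let $p\ge 1$ and $n\ge1$ be integers and let a finite set $W$ be partitioned into $p$ sets $W_1,\dots,W_p$, each of cardinality $n$. There is a family $\mathcal{F}=\{f_{o_1,\dots,o_p}: o_1\in W_1,\dots,o_p\in W_p\}$ of (weighted) coverage functions on the ground set $W$ satisfying: (Indistinguishability) for every $i\in[p]$, any two functions $f_{o_1,\dots,o_p},f_{o'_1,\dots,o'_p}\in\mathcal{F}$ with $o_1=o'_1,\dots,o_{i-1}=o'_{i-1}$ agree on every subset of $W_1\cup\cdots\cup W_i$; (Value gap) for every $f_{o_1,\dots,o_p}\in\mathcal{F}$, $f_{o_1,\dots,o_p}(W)=f_{o_1,\dots,o_p}(\{o_1,\dots,o_p\})\le 2p$ and $$\max_{S\subseteq W\setminus\{o_1,\dots,o_p\},\ |S|\le p} f_{o_1,\dots,o_p}(S)\ \le\ p+(H_p)^2\ \le\ \frac{p+(H_p)^2}{2p-H_p}\cdot f_{o_1,\dots,o_p}(\{o_1,\dots,o_p\}).$$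
   Context: $H_p=1+\frac12+\cdots+\frac1p$ is the $p$-th harmonic number. A weighted coverage function on $W$ is a function $f(S)=\sum_{u\in\bigcup_{v\in S}v}a(u)$, where each element $v\in W$ is identified with a subset of a finite universe $U$ and $a:U\to\mathbb{R}_{\ge0}$ are weights. *)

From HB Require Import structures.
From mathcomp Require Import all_boot all_order all_algebra.
From mathcomp Require Import reals.
Set Implicit Arguments. Unset Strict Implicit. Unset Printing Implicit Defensive.
Import Order.TTheory GRing.Theory Num.Theory.
Local Open Scope ring_scope.

Definition harmonic (R : realType) (p : nat) : R :=
  \sum_(i < p) (i.+1%:R)^-1.

Definition is_coverage (R : realType) (T : finType) (f : {set T} -> R) : Prop :=
  exists (U : finType) (a : U -> R) (c : T -> {set U}),
    (forall u, 0 <= a u) /\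
    (forall S : {set T}, f S = \sum_(u in \bigcup_(v in S) c v) a u).

(* o picks one element o_i from each block W_i = blk^-1(i). *)
Definition is_choice (p : nat) (T : finType) (blk : T -> 'I_p) (o : 'I_p -> T) : Prop :=
  forall i, blk (o i) = i.

(* The universe is {ffun T -> bool}: random subsets of W in which each x is
   present independently with probability 1 - a_(blk x), weighted to total mass 2p,
   where u_t = sqrt((p - t)/p) and a_t = u_(t+1)/u_t, so that o_0, ..., o_(t-1) are
   all absent with probability u_t.  An element v covers the sets in which v is
   present and o_0, ..., o_(blk v - 1) are absent.  This only involves the o_j with
   j < blk v, whence indistinguishability, and every set is covered by its first
   present o_i, whence f(W) = f(O) = 2p.
   If S avoids O, then for t < p - 1 the event "o_t is the first present o_i and
   every s in S with blk s <= t is absent" is not covered by S and has mass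
   2p r_t prod_(s in S, blk s <= t) a_(blk s), where r_t = u_t - u_(t+1).  Writing
   this product as u_(t+1) exp(X_t - ln u_(t+1)) and using exp x >= 1 + x makes the
   total uncovered mass linear in the ln a_(blk s); after exchanging the sums every
   term is controlled through r_t (u_t + u_(t+1)) = 1/p, each s in S costs at most
   1/(4p), and the uncovered mass is at least p - H_p^2 as soon as H_p >= 11/6,
   i.e. p >= 3. *)

From mathcomp Require Import all_boot all_order all_algebra.
From mathcomp Require Import reals.
From mathcomp Require sequences.
From mathcomp Require Import exp.
From mathcomp Require Import ring lra zify.
Set Implicit Arguments.
Unset Strict Implicit.
Unset Printing Implicit Defensive.
Import Order.TTheory GRing.Theory Num.Theory.
Local Open Scope ring_scope.
Local Notation expR := sequences.expR.

Lemma ln_le_subr1 (R : realType) (x : R) : 0 < x -> ln x <= x - 1.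
Proof. by move=> x0; have := @le_ln1Dx R (x - 1); rewrite subrKC; apply; lra. Qed.

Lemma ln_ge_1subV (R : realType) (x : R) : 0 < x -> 1 - x^-1 <= ln x.
Proof.
move=> x0; have := @ln_le_subr1 R x^-1; rewrite invr_gt0 lnV ?posrE // => /(_ x0).
lra.
Qed.

Lemma expR_ge_tangent (R : realType) (x y : R) : 0 < y ->
  y * (1 + x - ln y) <= expR x.
Proof.
move=> y0; have -> : expR x = y * expR (x - ln y).
  by rewrite expRB lnK ?posrE // mulrC divfK ?gt_eqF.
by rewrite ler_pM2l // -addrA expR_ge1Dx.
Qed.

Lemma sum_mul_sum_exchange (R : pzRingType) (I : Type) (s : seq I) (P : pred I)
    (b : I -> nat) (f : nat -> R) (h : I -> R) (N : nat) :
  \sum_(0 <= t < N) f t * \sum_(i <- s | P i && (b i <= t)%N) h i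
  = \sum_(i <- s | P i) (\sum_(b i <= t < N) f t) * h i.
Proof.
under eq_bigr do rewrite big_distrr big_mkcondr /=.
rewrite exchange_big; apply: eq_bigr => i _.
rewrite big_distrl (big_nat_widenl (b i) 0) // big_mkcondr /=.
by apply: eq_bigr => t _; case: ifP.
Qed.

Lemma natr_pred (R : pzRingType) n : (0 < n)%N -> n.-1%:R = n%:R - 1 :> R.
Proof. by case: n => // n _; rewrite -natr1 addrK. Qed.

Lemma sumr_le_subset (R : numDomainType) (I : finType) (A B : {set I}) (F : I -> R) :
  A \subset B -> (forall i, 0 <= F i) -> \sum_(i in A) F i <= \sum_(i in B) F i.
Proof.
move=> AB F0; rewrite [leRHS](@big_setID _ _ _ _ B A) (setIidPr AB) lerDl.
by apply: sumr_ge0 => i _.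
Qed.

Lemma sum_prod_event (R : comPzSemiRingType) (T : finType) (G : T -> bool -> R)
    (x0 : T) (A : {set T}) :
  x0 \notin A -> (forall x, G x true + G x false = 1) ->
  \sum_(w : {ffun T -> bool} | w x0 && [forall x in A, ~~ w x]) \prod_x G x (w x)
  = G x0 true * \prod_(x in A) G x false.
Proof.
move=> x0A G1.
pose Q x b := ((x == x0) ==> b) && ((x \in A) ==> ~~ b).
rewrite (eq_bigl (fun w => w \in family Q)); last first.
  move=> w; apply/andP/familyP => [[wx0 /forall_inP wA] x | wQ].
    by rewrite unfold_in /Q; case: eqP => [->|_]; rewrite ?wx0 //=; apply/implyP/wA.
  split; first by have := wQ x0; rewrite unfold_in /Q eqxx (negPf x0A) /= andbT.
  by apply/forall_inP => x xA; have := wQ x; rewrite unfold_in /Q xA => /andP[].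
rewrite -bigA_distr_big_dep (bigD1 x0) //=.
rewrite [in RHS]big_mkcond [in RHS](bigD1 x0) //= (negPf x0A) mul1r.
congr (_ * _); first by rewrite big_mkcond big_bool /Q eqxx (negPf x0A) /= addr0.
apply: eq_bigr => x xx0; rewrite big_mkcond big_bool /Q (negPf xx0) /=.
by case: (x \in A); rewrite /= ?add0r ?G1.
Qed.

Section Harmonic.
Variables (R : realType) (p : nat).

Lemma harmonic_ge0 : 0 <= harmonic R p.
Proof. by apply: sumr_ge0 => i _; rewrite invr_ge0. Qed.

Lemma harmonic_le : harmonic R p <= p%:R.
Proof.
rewrite -[p in p%:R]card_ord -sumr_const; apply: ler_sum => i _.
by rewrite invf_le1 ?ltr0n // ler1n.
Qed.

Lemma sum_inv_le_harmonic N : (N <= p)%N ->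
  \sum_(0 <= t < N) (t.+1%:R)^-1 <= harmonic R p.
Proof.
move=> Np; rewrite /harmonic -(big_mkord xpredT (fun i => (i.+1%:R)^-1)).
by rewrite (big_cat_nat (leq0n N) Np) /= lerDl sumr_ge0 // => i _; rewrite invr_ge0.
Qed.

Lemma sum_inv_rev_le N : (N <= p)%N ->
  \sum_(0 <= t < N) ((N - t)%:R)^-1 <= harmonic R p.
Proof.
move=> Np; rewrite big_nat_rev /= add0n.
rewrite (eq_big_nat _ _ (F2 := fun t => (t.+1%:R)^-1)) ?sum_inv_le_harmonic //.
by move=> t /andP[_ tN]; congr (_%:R^-1); lia.
Qed.

Lemma harmonic_ge_11_6 : (3 <= p)%N -> 11 / 6 <= harmonic R p.
Proof.
move=> p3; apply: le_trans (sum_inv_le_harmonic p3).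
rewrite !big_nat_recr //= big_geq //.
suff -> : 11 / 6 = 0 + 1%:R^-1 + 2%:R^-1 + 3%:R^-1 :> R by [].
by field.
Qed.

Lemma harmonic_sqr_ge : (0 < p)%N -> (p <= 2)%N -> p%:R <= harmonic R p ^+ 2.
Proof.
case: p => [|[|[|//]]] // _ _; rewrite /harmonic; first by rewrite big_ord1 invr1 expr1n.
rewrite big_ord_recr big_ord1 /=.
suff -> : 1%:R^-1 + 2%:R^-1 = 3 / 2 :> R by lra.
by field.
Qed.

End Harmonic.

Section Profile.
Variables (R : realType) (p : nat).

Definition u t : R := Num.sqrt ((p - t)%:R / p%:R).
Definition r t : R := u t - u t.+1.
Definition a t : R := u t.+1 / u t.

Lemma u_ge0 t : 0 <= u t.
Proof. exact: sqrtr_ge0. Qed.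

Lemma u_sqr t : u t ^+ 2 = (p - t)%:R / p%:R.
Proof. by rewrite sqr_sqrtr // divr_ge0. Qed.

Lemma u_gt0 t : (t < p)%N -> 0 < u t.
Proof. by move=> tp; rewrite sqrtr_gt0 divr_gt0 // ltr0n; lia. Qed.

Lemma u0 : (0 < p)%N -> u 0 = 1.
Proof. by move=> p0; rewrite /u subn0 divff ?sqrtr1 // pnatr_eq0 -lt0n. Qed.

Lemma u_leS t : u t.+1 <= u t.
Proof. by rewrite ler_sqrt ?divr_ge0 // ler_wpM2r ?invr_ge0 // ler_nat leq_sub2l. Qed.

Lemma r_ge0 t : 0 <= r t.
Proof. by rewrite subr_ge0 u_leS. Qed.

Lemma a_ge0 t : 0 <= a t.
Proof. by rewrite divr_ge0 ?u_ge0. Qed.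

Lemma a_le1 t : a t <= 1.
Proof.
rewrite /a; have [->|u_neq0] := eqVneq (u t) 0; first by rewrite invr0 mulr0.
by rewrite ler_pdivrMr ?mul1r ?u_leS // lt_def u_neq0 u_ge0.
Qed.

Lemma a_gt0 t : (t.+1 < p)%N -> 0 < a t.
Proof. by move=> tp; rewrite divr_gt0 ?u_gt0 //; lia. Qed.

Lemma r_mulD t : (t < p)%N -> r t * (u t + u t.+1) = p%:R^-1.
Proof.
move=> tp; have -> : r t * (u t + u t.+1) = u t ^+ 2 - u t.+1 ^+ 2 by rewrite /r; ring.
rewrite !u_sqr -mulrBl.
have -> : (p - t)%N = (p - t.+1).+1 by lia.
by rewrite -natrB // subSnn mul1r.
Qed.

Lemma r_mul2u_le t : (t < p)%N -> r t * (2 * u t.+1) <= p%:R^-1.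
Proof.
move=> tp; rewrite -(r_mulD tp) ler_wpM2l ?r_ge0 //.
by have := u_leS t; lra.
Qed.

Lemma r_mul2u_ge t : (t < p)%N -> p%:R^-1 <= r t * (2 * u t).
Proof.
move=> tp; rewrite -(r_mulD tp) ler_wpM2l ?r_ge0 //.
by have := u_leS t; lra.
Qed.

Lemma r_eq t : (t < p)%N -> r t = (1 - a t) * u t.
Proof. by move=> tp; rewrite mulrBl mul1r divfK // gt_eqF ?u_gt0. Qed.

Lemma ln_a t : (t.+1 < p)%N -> ln (a t) = ln (u t.+1) - ln (u t).
Proof. by move=> tp; rewrite ln_div ?posrE ?u_gt0 //; lia. Qed.

Lemma lnN_a_bounds t : (t.+1 < p)%N ->
  r t / u t <= - ln (a t) <= r t / u t.+1.
Proof.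
move=> tp; have ut1 : 0 < u t.+1 by apply: u_gt0.
have ut : 0 < u t by apply: u_gt0; lia.
rewrite -lnV ?posrE ?a_gt0 // invf_div; apply/andP; split.
  by apply: le_trans (ln_ge_1subV (divr_gt0 ut ut1)); rewrite invf_div mulrBl divff ?gt_eqF.
by apply: le_trans (ln_le_subr1 (divr_gt0 ut ut1)) _; rewrite mulrBl divff ?gt_eqF.
Qed.

Lemma prod_a t : (0 < p)%N -> (t <= p)%N -> \prod_(0 <= j < t) a j = u t.
Proof.
move=> p0; elim: t => [|t IH] tp; first by rewrite big_geq ?u0.
rewrite big_nat_recr //= IH ?(ltnW tp) // mulrCA divff ?mulr1 //.
by rewrite gt_eqF ?u_gt0.
Qed.

Lemma sum_ln_a t : (t < p)%N -> \sum_(0 <= j < t) ln (a j) = ln (u t).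
Proof.
move=> tp; rewrite big_nat_cond (eq_bigr (fun j => ln (u j.+1) - ln (u j))).
  by rewrite -big_nat_cond telescope_sumr // u0 ?ln1 ?subr0 //; lia.
by move=> j /andP[/andP[_ jt] _]; rewrite ln_a //; lia.
Qed.

Lemma mul_u_sqr t : (0 < p)%N -> p%:R * u t ^+ 2 = (p - t)%:R.
Proof. by move=> p0; rewrite u_sqr mulrC divfK // pnatr_eq0 -lt0n. Qed.

Definition c t : R := r t * u t.+1.
Definition tail l : R := \sum_(l <= t < p.-1) c t.
Definition sqr_gaps : R := \sum_(0 <= t < p.-1) r t ^+ 2.

Lemma c_ge0 t : 0 <= c t.
Proof. by rewrite mulr_ge0 ?r_ge0 ?u_ge0. Qed.

Lemma sqr_gaps_ge0 : 0 <= sqr_gaps.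
Proof. by apply: sumr_ge0 => t _; apply: sqr_ge0. Qed.

Lemma tail_ge0 l : 0 <= tail l.
Proof. by apply: sumr_ge0 => t _; apply: c_ge0. Qed.

Lemma tail_eq l : (0 < p)%N ->
  tail l = (p.-1 - l)%:R / (2 * p%:R) - (\sum_(l <= t < p.-1) r t ^+ 2) / 2.
Proof.
move=> p0; rewrite mulr_natl -sumr_const_nat mulr_suml -sumrB.
apply: eq_big_nat => t /andP[_ tp].
rewrite /c invfM -(r_mulD (t := t)) /r; last by lia.
have half_diff_sqr (x y : R) :
  (x - y) * y = 2^-1 * ((x - y) * (x + y)) - (x - y) ^+ 2 / 2 by field.
exact: half_diff_sqr.
Qed.

Lemma tail_le l : (0 < p)%N -> tail l <= (p.-1 - l)%:R / (2 * p%:R).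
Proof.
move=> p0; rewrite tail_eq // lerBlDr lerDl divr_ge0 // sumr_ge0 // => t _.
exact: sqr_ge0.
Qed.

Lemma tail_ge l : (0 < p)%N ->
  (p.-1 - l)%:R / (2 * p%:R) - sqr_gaps / 2 <= tail l.
Proof.
move=> p0; rewrite tail_eq // lerD2l lerN2 ler_pM2r ?invr_gt0 //.
have sqr_r_ge0 t : 0 <= r t ^+ 2 by apply: sqr_ge0.
have [lp|/ltnW pl] := leqP l p.-1; last by rewrite big_geq // sumr_ge0.
by rewrite /sqr_gaps (big_cat_nat (leq0n l) lp) lerDr sumr_ge0.
Qed.

Lemma sqr_r_le t : (t.+1 < p)%N -> r t ^+ 2 <= (4 * p%:R * (p.-1 - t)%:R)^-1.
Proof.
move=> tp; have p0 : (0 < p)%N by lia.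
have pR : 0 < p%:R :> R by rewrite ltr0n.
have -> : (p.-1 - t)%N = (p - t.+1)%N by lia.
have pu_gt0 : 0 < p%:R * u t.+1 ^+ 2 by rewrite mulr_gt0 // exprn_gt0 // u_gt0.
rewrite -(mul_u_sqr _ p0) -[X in _ <= X]mul1r ler_pdivlMr ?(mulr_gt0 _ pu_gt0) ?mulr_gt0 //.
have -> : r t ^+ 2 * (4 * p%:R * (p%:R * u t.+1 ^+ 2))
          = (p%:R * (r t * (2 * u t.+1))) ^+ 2 by ring.
rewrite exprn_ile1 ?mulr_ge0 ?r_ge0 ?u_ge0 //.
by rewrite -ler_pdivlMl // mulr1 r_mul2u_le //; lia.
Qed.

Lemma tail_mul_ln_a_ge l : (0 < p)%N -> - (4 * p%:R)^-1 <= tail l * ln (a l).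
Proof.
move=> p0; rewrite [tail l * _]mulrC; have pR : 0 < p%:R :> R by rewrite ltr0n.
have [lp|pl] := ltnP l.+1 p; last first.
  by rewrite /tail big_geq ?mulr0 ?oppr_le0 ?invr_ge0 ?mulr_ge0 //; lia.
have /andP[_ lnN_a_le] := lnN_a_bounds lp.
have u1 : 0 < u l.+1 by apply: u_gt0.
have tail_le_sqr : tail l <= u l.+1 ^+ 2 / 2.
  apply: le_trans (tail_le l p0) _.
  have -> : (p.-1 - l)%N = (p - l.+1)%N by lia.
  rewrite -(mul_u_sqr _ p0).
  suff -> : p%:R * u l.+1 ^+ 2 / (2 * p%:R) = u l.+1 ^+ 2 / 2 by [].
  by field; rewrite gt_eqF.
rewrite lerNl -mulNr.
apply: le_trans (_ : r l / u l.+1 * tail l <= _); first by rewrite ler_wpM2r ?tail_ge0.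
apply: le_trans (_ : r l / u l.+1 * (u l.+1 ^+ 2 / 2) <= _).
  by rewrite ler_wpM2l ?divr_ge0 ?r_ge0 ?u_ge0.
have -> : r l / u l.+1 * (u l.+1 ^+ 2 / 2) = r l * (2 * u l.+1) / 4.
  by field; rewrite gt_eqF.
by rewrite invfM mulrC ler_pM2l ?invr_gt0 // r_mul2u_le //; lia.
Qed.

Lemma tail_mul_ln_a_le l : (l.+1 < p)%N ->
  tail l * ln (a l) <= ((4 * p%:R)^-1 + sqr_gaps / 4) / (p - l)%:R - (4 * p%:R)^-1.
Proof.
move=> lp; rewrite [tail l * _]mulrC; have p0 : (0 < p)%N by lia.
have pR : 0 < p%:R :> R by rewrite ltr0n.
have /andP[lnN_a_ge _] := lnN_a_bounds lp.
have u0 : 0 < u l by apply: u_gt0; lia.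
set D : R := (p - l)%:R.
have D0 : 0 < D by rewrite ltr0n; lia.
have inv2D_le : (2 * D)^-1 <= - ln (a l).
  apply: le_trans lnN_a_ge.
  have -> : r l / u l = r l * (2 * u l) / (2 * u l ^+ 2) by field; rewrite gt_eqF.
  have -> : (2 * D)^-1 = p%:R^-1 / (2 * u l ^+ 2).
    by rewrite /D -(mul_u_sqr _ p0); field; rewrite !gt_eqF.
  by rewrite ler_pM2r ?invr_gt0 ?mulr_gt0 ?exprn_gt0 // r_mul2u_ge //; lia.
have tail_geD : (D - 1) / (2 * p%:R) - sqr_gaps / 2 <= tail l.
  have -> : D - 1 = (p.-1 - l)%:R.
    rewrite /D; have -> : (p - l)%N = (p.-1 - l).+1 by lia.
    by rewrite -natr1 addrK.
  exact: tail_ge.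
rewrite -lerN2 -mulNr opprB.
apply: (@le_trans _ _ ((2 * D)^-1 * tail l)); last by rewrite ler_wpM2r ?tail_ge0.
apply: (@le_trans _ _ ((2 * D)^-1 * ((D - 1) / (2 * p%:R) - sqr_gaps / 2))).
  suff -> : (2 * D)^-1 * ((D - 1) / (2 * p%:R) - sqr_gaps / 2)
            = (4 * p%:R)^-1 - ((4 * p%:R)^-1 + sqr_gaps / 4) / D by [].
  by field; rewrite !gt_eqF.
by rewrite ler_wpM2l ?invr_ge0 ?mulr_ge0 // ltW.
Qed.

Lemma sqr_gaps_le : sqr_gaps <= harmonic R p / (4 * p%:R).
Proof.
apply: le_trans (_ : \sum_(0 <= t < p.-1) (4 * p%:R)^-1 * ((p.-1 - t)%:R)^-1 <= _).
  apply: ler_sum_nat => t /andP[_ tp]; rewrite -invfM; apply: sqr_r_le; lia.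
rewrite -mulr_sumr mulrC; apply: ler_wpM2r; first by rewrite invr_ge0 mulr_ge0.
exact: sum_inv_rev_le (leq_pred p).
Qed.

Lemma sqr_gaps_le_mul : (0 < p)%N -> p%:R * sqr_gaps <= harmonic R p / 4.
Proof.
move=> p0; have pR : 0 < p%:R :> R by rewrite ltr0n.
apply: le_trans (ler_wpM2l (ltW pR) sqr_gaps_le) _.
suff -> : p%:R * (harmonic R p / (4 * p%:R)) = harmonic R p / 4 by [].
by field; rewrite gt_eqF.
Qed.

Lemma sum_tail_mul_ln_a_le : (0 < p)%N ->
  \sum_(0 <= l < p.-1) tail l * ln (a l)
  <= ((4 * p%:R)^-1 + sqr_gaps / 4) * harmonic R p - (p%:R - 1) / (4 * p%:R).
Proof.
move=> p0; have pR : 0 < p%:R :> R by rewrite ltr0n.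
apply: le_trans (_ : \sum_(0 <= l < p.-1)
    (((4 * p%:R)^-1 + sqr_gaps / 4) / (p - l)%:R - (4 * p%:R)^-1) <= _).
  by apply: ler_sum_nat => l /andP[_ lp]; apply: tail_mul_ln_a_le; lia.
rewrite sumrB sumr_const_nat subn0 -mulr_sumr -[_ *+ p.-1]mulr_natl natr_pred //.
rewrite lerD2r; apply: ler_wpM2l.
  by rewrite addr_ge0 ?divr_ge0 ?sqr_gaps_ge0 // invr_ge0 mulr_ge0 // ltW.
apply: le_trans (sum_inv_rev_le R (leq_pred p)); apply: ler_sum_nat => l /andP[_ lp].
by rewrite lef_pV2 ?posrE ?ltr0n ?ler_nat; lia.
Qed.

End Profile.

Section UncoveredMass.
Variables (R : realType) (p : nat) (T : finType) (S : {set T}) (b : T -> nat).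

Local Notation u := (u R p).
Local Notation r := (r R p).
Local Notation a := (a R p).
Local Notation c := (c R p).
Local Notation tail := (tail R p).

Definition uncovered_mass : R :=
  \sum_(0 <= t < p.-1) r t * \prod_(s in S | (b s <= t)%N) a (b s).

Lemma r_mul_prod_a_ge t : (t.+1 < p)%N ->
  c t * (1 + \sum_(s in S | (b s <= t)%N) ln (a (b s))
            - \sum_(0 <= l < p.-1 | (l <= t)%N) ln (a l))
  <= r t * \prod_(s in S | (b s <= t)%N) a (b s).
Proof.
move=> tp; rewrite -mulrA ler_wpM2l ?r_ge0 //.
have -> : \sum_(0 <= l < p.-1 | (l <= t)%N) ln (a l) = ln (u t.+1).
  rewrite -sum_ln_a; last lia.
  by rewrite [RHS](big_nat_widen _ _ p.-1) //; lia.
have -> : \prod_(s in S | (b s <= t)%N) a (b s)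
          = expR (\sum_(s in S | (b s <= t)%N) ln (a (b s))).
  rewrite expR_sum; apply: eq_bigr => s /andP[_ bs].
  by rewrite lnK // posrE a_gt0 //; lia.
by apply: expR_ge_tangent; apply: u_gt0.
Qed.

Lemma uncovered_mass_ge_linear :
  \sum_(0 <= t < p.-1) c t + \sum_(s in S) tail (b s) * ln (a (b s))
    - \sum_(0 <= l < p.-1) tail l * ln (a l) <= uncovered_mass.
Proof.
have exchangeX : \sum_(0 <= t < p.-1) c t * \sum_(s in S | (b s <= t)%N) ln (a (b s))
    = \sum_(s in S) tail (b s) * ln (a (b s)) := sum_mul_sum_exchange _ _ _ _ _ _.
have exchangeY : \sum_(0 <= t < p.-1) c t * \sum_(0 <= l < p.-1 | (l <= t)%N) ln (a l)
    = \sum_(0 <= l < p.-1) tail l * ln (a l)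
  := sum_mul_sum_exchange (index_iota 0 p.-1) xpredT id _ _ _.
rewrite -exchangeX -exchangeY -big_split -sumrB; apply: ler_sum_nat => t /andP[_ tp].
by have := r_mul_prod_a_ge (t := t); rewrite mulrBr mulrDr mulr1; apply; lia.
Qed.

Lemma sum_tail_mul_ln_a_ge : (0 < p)%N -> (#|S| <= p)%N ->
  - (1 / 4) <= \sum_(s in S) tail (b s) * ln (a (b s)).
Proof.
move=> p0 Sp; have pR : 0 < p%:R :> R by rewrite ltr0n.
apply: le_trans (_ : \sum_(s in S) - (4 * p%:R)^-1 <= _); last first.
  by apply: ler_sum => s _; apply: tail_mul_ln_a_ge.
rewrite sumr_const -[_ *+ #|_|]mulr_natr mulNr lerN2.
apply: le_trans (_ : (4 * p%:R)^-1 * p%:R <= _).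
  by rewrite ler_wpM2l ?invr_ge0 ?mulr_ge0 ?ler0n // ler_nat.
suff -> : (4 * p%:R)^-1 * p%:R = 1 / 4 :> R by [].
by field; rewrite gt_eqF.
Qed.

Lemma uncovered_mass_ge : (3 <= p)%N -> (#|S| <= p)%N ->
  p%:R - harmonic R p ^+ 2 <= 2 * p%:R * uncovered_mass.
Proof.
move=> p3 Sp; have p0 : (0 < p)%N by lia.
have pR : 0 < p%:R :> R by rewrite ltr0n.
have := sqr_gaps_le_mul R p0; have := sqr_gaps_ge0 R p.
have := tail_ge R 0 p0; have := sum_tail_mul_ln_a_ge p0 Sp.
have := sum_tail_mul_ln_a_le R p0; have := uncovered_mass_ge_linear.
have := harmonic_ge_11_6 R p3; have := harmonic_ge0 R p.
rewrite subn0 natr_pred // /tail.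
set H := harmonic R p; set E := sqr_gaps R p; set q : R := p%:R.
move=> H0 H_ge linear_le sumL_le sumS_ge sum_c_ge E0 qE_le.
set L := (q - 1) / (2 * q) - E / 2 - 1 / 4 - (((4 * q)^-1 + E / 4) * H - (q - 1) / (4 * q)).
have L_le : L <= uncovered_mass by rewrite /L; lra.
apply: le_trans (_ : 2 * q * L <= _); last by rewrite ler_wpM2l ?mulr_ge0 // ltW.
have -> : 2 * q * L = q - 3 / 2 - H / 2 - q * E * (1 + H / 2).
  by rewrite /L; field; rewrite gt_eqF.
have qEH_le : q * E * (1 + H / 2) <= H / 4 * (1 + H / 2).
  by rewrite ler_wpM2r // addr_ge0 ?divr_ge0.
(* 7 H^2 - 6 H - 12 >= 0 as soon as H >= 11/6. *)
have : 0 <= (H - 11 / 6) * (7 * H + 41 / 6) by rewrite mulr_ge0 //; lra.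
lra.
Qed.

End UncoveredMass.

Section Construction.
Variables (R : realType) (p : nat) (T : finType) (blk : T -> 'I_p).

Local Notation a := (a R p).

Definition presence (x : T) (b : bool) : R := if b then 1 - a (blk x) else a (blk x).

Definition weight (w : {ffun T -> bool}) : R := 2 * p%:R * \prod_x presence x (w x).

(* Since a (p - 1) = 0, the last disjunct only adds sets of weight 0; it makes
   the sets covered by the o_i exhaust the universe exactly. *)
Definition cover (o : 'I_p -> T) (v : T) : {set {ffun T -> bool}} :=
  [set w : {ffun T -> bool} | [forall j : 'I_p, (j < blk v)%N ==> ~~ w (o j)]
                              && (w v || (blk v == p.-1 :> nat))].

Definition coverage (o : 'I_p -> T) (S : {set T}) : R :=
  \sum_(w in \bigcup_(v in S) cover o v) weight w.

Lemma presence_ge0 x b : 0 <= presence x b.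
Proof. by case: b; rewrite /presence ?subr_ge0 ?a_le1 ?a_ge0. Qed.

Lemma presence_total x : presence x true + presence x false = 1.
Proof. exact: subrK. Qed.

Lemma weight_ge0 w : 0 <= weight w.
Proof. by rewrite mulr_ge0 ?mulr_ge0 ?ler0n // prodr_ge0 // => x _; apply: presence_ge0. Qed.

Lemma sum_weight : \sum_w weight w = 2 * p%:R.
Proof.
rewrite -big_distrr /= -bigA_distr_bigA big1 ?mulr1 // => x _.
by rewrite big_bool; apply: presence_total.
Qed.

Definition forced_absent (o : 'I_p -> T) (S : {set T}) (t : 'I_p) : {set T} :=
  [set o j | j : 'I_p & (j < t)%N] :|: [set s in S | (blk s <= t)%N].

Definition first_present (o : 'I_p -> T) (S : {set T}) (t : 'I_p) : {set {ffun T -> bool}} :=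
  [set w : {ffun T -> bool} | w (o t) && [forall x in forced_absent o S t, ~~ w x]].

Variable o : 'I_p -> T.

Lemma coverage_eq (o' : 'I_p -> T) (i : 'I_p) (S : {set T}) :
  (forall j : 'I_p, (j < i)%N -> o j = o' j) -> S \subset [set x | (blk x <= i)%N] ->
  coverage o S = coverage o' S.
Proof.
move=> oo' /subsetP Si; rewrite /coverage (eq_bigr (cover o')) // => v /Si; rewrite inE => vi.
apply/setP => w; rewrite !inE; congr (_ && _); apply: eq_forallb => j.
by case: ltnP => // jv; rewrite oo' //; apply: leq_trans vi.
Qed.

Lemma coverage_compl (S : {set T}) :
  coverage o S = 2 * p%:R - \sum_(w in ~: \bigcup_(v in S) cover o v) weight w.
Proof.
set U := \bigcup_(v in S) cover o v.
rewrite -sum_weight (bigID (mem U)) /=.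
rewrite [X in _ + X - _](eq_bigl (fun w => w \in ~: U)) ?addrK //.
by move=> w; rewrite inE.
Qed.

Lemma coverage_le (S : {set T}) : coverage o S <= 2 * p%:R.
Proof. by rewrite coverage_compl lerBlDr lerDl sumr_ge0 // => w _; apply: weight_ge0. Qed.

Hypothesis o_choice : is_choice blk o.

Local Notation O := [set o i | i : 'I_p].

Lemma bigcup_cover_choice : (0 < p)%N -> \bigcup_(v in O) cover o v = setT.
Proof.
move=> p0; apply/setP => w; rewrite inE; apply/bigcupP.
have [/existsP[i0 wi0]|/existsPn none] := boolP [exists i, w (o i)].
  have [i wi i_min] := @arg_minnP _ i0 (fun i => w (o i)) (fun i : 'I_p => nat_of_ord i) wi0.
  exists (o i); first exact: imset_f.
  rewrite inE o_choice; apply/andP; split; last by rewrite wi.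
  apply/forallP => j; apply/implyP => ji.
  by apply/negP => /i_min; rewrite leqNgt ji.
have last_lt : (p.-1 < p)%N by rewrite ltn_predL.
exists (o (Ordinal last_lt)); first exact: imset_f.
by rewrite inE o_choice /= eqxx orbT andbT; apply/forallP => j; rewrite none implybT.
Qed.

Lemma coverage_choice : (0 < p)%N -> coverage o O = 2 * p%:R.
Proof.
move=> p0; rewrite /coverage bigcup_cover_choice // -sum_weight.
by apply: eq_bigl => w; rewrite inE.
Qed.

Lemma coverage_setT : (0 < p)%N -> coverage o setT = 2 * p%:R.
Proof.
move=> p0; apply/eqP; rewrite eq_le coverage_le -{1}(coverage_choice p0).
rewrite /coverage bigcup_cover_choice //.
apply: sumr_le_subset => [|w]; last exact: weight_ge0.
apply/subsetP => w _; have : w \in \bigcup_(v in O) cover o v by rewrite bigcup_cover_choice.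
by case/bigcupP => v _ wv; apply/bigcupP; exists v.
Qed.

Lemma first_present_mass (S : {set T}) (t : 'I_p) : S \subset ~: O ->
  \sum_(w in first_present o S t) weight w
  = 2 * p%:R * (r R p t * \prod_(s in S | (blk s <= t)%N) a (blk s)).
Proof.
move=> /subsetP SO; have p0 : (0 < p)%N := leq_ltn_trans (leq0n t) (ltn_ord t).
set before := [set o j | j : 'I_p & (j < t)%N].
set S_t := [set s in S | (blk s <= t)%N].
have before_S_t : [disjoint before & S_t].
  rewrite disjoint_subset; apply/subsetP => _ /imsetP[j _ ->].
  by rewrite !inE; apply/negP => /andP[/SO]; rewrite inE imset_f.
have ot_absent : o t \notin before :|: S_t.
  rewrite in_setU negb_or; apply/andP; split.
    apply/imsetP => -[j]; rewrite inE => jt /(congr1 blk); rewrite !o_choice => tj.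
    by rewrite tj ltnn in jt.
  by rewrite inE; apply/negP => /andP[/SO]; rewrite inE imset_f.
rewrite /weight -big_distrr /=; congr (_ * _).
rewrite (eq_bigl (fun w : {ffun T -> bool} =>
                    w (o t) && [forall x in before :|: S_t, ~~ w x])); last first.
  by move=> w; rewrite inE.
rewrite sum_prod_event //; last exact: presence_total.
rewrite /presence o_choice (eq_bigl [predU before & S_t]); last by move=> x; rewrite !inE.
rewrite bigU // big_imset /=; last by move=> j1 j2 _ _ /(congr1 blk); rewrite !o_choice.
rewrite (eq_bigr (fun j : 'I_p => a j)); last by move=> j _; rewrite o_choice.
rewrite (eq_bigl (fun j : 'I_p => (j < t)%N)); last by move=> j; rewrite inE.
have tp := ltnW (ltn_ord t).
rewrite -(big_ord_widen _ a tp) -(big_mkord xpredT) prod_a //.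
rewrite mulrA -r_eq //; congr (_ * _).
by apply: eq_bigl => s; rewrite inE.
Qed.

Lemma first_present_lt (S : {set T}) (t1 t2 : 'I_p) w : (t1 < t2)%N ->
  w \in first_present o S t1 -> w \notin first_present o S t2.
Proof.
move=> t12; rewrite !inE => /andP[w1 _]; apply/negP => /andP[_ /forall_inP absent].
suff /absent : o t1 \in forced_absent o S t2 by rewrite w1.
by rewrite inE; apply/orP; left; apply/imsetP; exists t1; rewrite ?inE.
Qed.

Lemma first_present_disjoint (S : {set T}) (t1 t2 : 'I_p) : t1 != t2 ->
  [disjoint first_present o S t1 & first_present o S t2].
Proof.
move=> t12; rewrite disjoint_subset; apply/subsetP => w w1; rewrite inE; apply/negP => w2.
case: (ltngtP t1 t2) => [lt|gt|/val_inj eq].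
- by move: w2; apply/negP; apply: first_present_lt w1.
- by move: w1; apply/negP; apply: first_present_lt w2.
- by rewrite eq eqxx in t12.
Qed.

Lemma first_present_uncovered (S : {set T}) (t : 'I_p) : (t.+1 < p)%N ->
  first_present o S t \subset ~: \bigcup_(v in S) cover o v.
Proof.
move=> tp; apply/subsetP => w; rewrite !inE => /andP[wt /forall_inP absent].
apply/bigcupP => -[v vS]; rewrite inE => /andP[/forallP before wv].
have [vt|tv] := leqP (blk v) t; last by have := before t; rewrite tv wt.
have /absent/negPf wvF : v \in forced_absent o S t by rewrite !inE vS vt orbT.
by move: wv; rewrite wvF => /eqP; lia.
Qed.

Lemma coverage_le_uncovered (S : {set T}) : S \subset ~: O ->
  coverage o S <= 2 * p%:R - 2 * p%:R * uncovered_mass R p S (fun s => nat_of_ord (blk s)).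
Proof.
move=> SO; rewrite coverage_compl lerD2l lerN2.
pose E (t : 'I_p.-1) := first_present o S (widen_ord (leq_pred p) t).
apply: le_trans (_ : \sum_(w in \bigcup_t E t) weight w <= _); last first.
  apply: sumr_le_subset => [|w]; last exact: weight_ge0.
  apply/bigcupsP => t _; apply: first_present_uncovered => /=; have := ltn_ord t; lia.
rewrite partition_disjoint_bigcup => [|t1 t2 t12]; last first.
  by apply: first_present_disjoint; apply: contra t12 => /eqP[/val_inj ->].
under eq_bigr do rewrite first_present_mass //.
by rewrite /uncovered_mass big_mkord big_distrr.
Qed.

End Construction.

Theorem lemma20 (R : realType) (p n : nat) (hp : (1 <= p)%N) (hn : (1 <= n)%N)
  (T : finType) (blk : T -> 'I_p)
  (hblk : forall i : 'I_p, #|[set x | blk x == i]| = n) :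
  exists F : ('I_p -> T) -> {set T} -> R,
    (forall o, is_choice blk o -> is_coverage (F o)) /\
    (* indistinguishability *)
    (forall (i : 'I_p) o o', is_choice blk o -> is_choice blk o' ->
       (forall j : 'I_p, (j < i)%N -> o j = o' j) ->
       forall S : {set T}, S \subset [set x | (blk x <= i)%N] ->
         F o S = F o' S) /\
    (* value gap *)
    (forall o, is_choice blk o ->
       let O := [set o i | i : 'I_p] in
       F o setT = F o O /\
       F o O <= 2 * p%:R /\
       (forall S : {set T}, S \subset ~: O -> (#|S| <= p)%N ->
          F o S <= p%:R + harmonic R p ^+ 2) /\
       p%:R + harmonic R p ^+ 2 <=
         (p%:R + harmonic R p ^+ 2) / (2 * p%:R - harmonic R p) * F o O).
Proof.
(* The construction does not depend on the block sizes, so [hn] and [hblk] are unused. *)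
exists (coverage R blk); split; [|split].
- move=> o _; exists {ffun T -> bool}, (weight R blk), (cover blk o).
  by split=> // w; apply: weight_ge0.
- by move=> i o o' _ _ oo' S; apply: coverage_eq.
move=> o ho O; rewrite /O coverage_setT // coverage_choice //.
split=> //; split=> //; split.
  move=> S SO Sp; have [p3|p2] := leqP 3 p.
    apply: le_trans (coverage_le_uncovered R ho SO) _.
    by have := uncovered_mass_ge R (fun s => nat_of_ord (blk s)) p3 Sp; lra.
  by apply: le_trans (coverage_le R blk o S) _; have := harmonic_sqr_ge R hp p2; lra.
have H_le := harmonic_le R p; have H_ge0 := harmonic_ge0 R p.
have pR : 0 < p%:R :> R by rewrite ltr0n.
rewrite -mulrA ler_peMr ?addr_ge0 ?sqr_ge0 ?ler0n // ler_pdivlMl; lra.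
Qed.
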